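(* Consider a hierarchical clustering of a sensor network with levels $1,2,\dots,T$. For each level $i$, let $C_i$ be the (finite, nonempty) collection of clusters at level $i$, and for $l \in C_i$ let $N_i^{(l)}$ be the number of nodes in cluster $l$ at level $i$. Assume that every cluster size satisfies $N_i^{(l)} > 3$, and that cluster sizes strictly increase with level: for all levels $j < i$, all $l \in C_j$ and all $p \in C_i$, $N_j^{(l)} < N_i^{(p)}$. Let $K_T > 0$ be the sparsity of the whole data field, and for each level $i$ define the threshold $$K_{i\_T} = \max_{l \in C_i} \frac{N_i^{(l)}}{\log_2 N_i^{(l)}}.$$ In the HDACS scheme, the cluster head of cluster $l$ at level $i$ would transmit $M_i^{(l)} = K_T \log_2 N_i^{(l)}$ compressive-sensing measurements, and it is called CS-disabled if $M_i^{(l)} > N_i^{(l)}$ (in which case it transmits its $N_i^{(l)}$ raw data values instead). If $K_T > K_{i\_T}$ for some level $i$, then every cluster at every level $j \le i$ is CS-disabled, i.e. $K_T \log_2 N_j^{(l)} > N_j^{(l)}$ for all $j \le i$ and all $l \in C_j$.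
   Context: Logarithms are base 2. The sparsity $K_T$ denotes the number of significant (nonzero) coefficients of the entire data field in the transform domain; in HDACS this single global value is used at every cluster to determine the number of measurements $M = K_T \log_2 N$, where $N$ is the local cluster size. *)

From HB Require Import structures.
From mathcomp Require Import all_boot all_order all_algebra.
From mathcomp Require Import all_classical all_reals all_analysis.
Unset Strict Implicit. Unset Printing Implicit Defensive.
Import Order.TTheory GRing.Theory Num.Theory.
Local Open Scope ring_scope.

Definition log2 {R : realType} (x : R) : R := ln x / ln 2.

Definition measurements {R : realType} (KT : R) (n : nat) : R :=
  KT * log2 (n%:R : R).

Definition cs_disabled {R : realType} (KT : R) (n : nat) : Prop :=
  (n%:R : R) < measurements KT n.

(* Clusters at level i are indexed by 'I_(c i); the max is a big max with
   neutral element 0 (harmless: all terms are positive since N > 3 and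
   C_i is nonempty). *)
Definition level_threshold (R : realType) (c : nat -> nat)
  (N : forall i : nat, 'I_(c i) -> nat) (i : nat) : R :=
  \big[Num.max/0]_(l < c i) ((N i l)%:R / log2 ((N i l)%:R : R)).

(** The function x / log2 x is nondecreasing on [4, +oo) (its derivative has the
    sign of ln x - 1, and ln 4 > 1), and cluster sizes are at least 4 and grow
    with the level.  Hence every cluster at a level j <= i has a ratio
    N / log2 N at most that of any cluster at level i, thus at most the
    threshold K_{i_T} < K_T, and N / log2 N < K_T is exactly N < K_T log2 N. *)
From HB Require Import structures.
From mathcomp Require Import all_boot all_order all_algebra.
From mathcomp Require Import all_classical all_reals all_analysis.
From mathcomp Require Import lra.
Import Order.TTheory GRing.Theory Num.Theory.
Local Open Scope ring_scope.

Section LogBounds.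
Variable R : realType.
Implicit Types a b x : R.

Lemma ln_le_subr1 x : 0 < x -> ln x <= x - 1.
Proof.
move=> x_gt0; have := @le_ln1Dx R (x - 1); rewrite addrCA subrr addr0; apply; lra.
Qed.

Lemma ln2_ge_half : 1 / 2 <= ln (2 : R).
Proof.
have half_gt0 : (0 : R) < 2^-1 by rewrite invr_gt0.
have := ln_le_subr1 _ half_gt0; rewrite lnV ?posrE //; lra.
Qed.

Lemma ln_ge1 x : 4 <= x -> 1 <= ln x.
Proof.
move=> x_ge4; have ln4 : ln (4 : R) = ln 2 + ln 2 by rewrite -lnM ?posrE //; congr ln; lra.
apply: (@le_trans _ _ (ln (4 : R))); last by rewrite ler_ln ?posrE //; lra.
by rewrite ln4; have := ln2_ge_half; lra.
Qed.

(* The chord bound ln (b / a) <= b / a - 1, multiplied by a, gives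
   a (ln b - ln a) <= b - a <= (b - a) ln a. *)
Lemma mulr_ln_le a b : 1 <= ln a -> 0 < a <= b -> a * ln b <= b * ln a.
Proof.
move=> ln_a_ge1 /andP[a_gt0 le_ab]; have b_gt0 : 0 < b by exact: lt_le_trans le_ab.
have := ln_le_subr1 _ (divr_gt0 b_gt0 a_gt0).
rewrite ln_div ?posrE // => chord.
have : a * (ln b - ln a) <= a * (b / a - 1) by rewrite ler_pM2l.
rewrite !mulrBr mulrCA divff ?gt_eqF // !mulr1; nra.
Qed.

Lemma ler_div_ln a b : 1 <= ln a -> 0 < a <= b -> a / ln a <= b / ln b.
Proof.
move=> ln_a_ge1 /andP[a_gt0 le_ab].
have ln_a_gt0 : 0 < ln a by lra.
have ln_b_gt0 : 0 < ln b by apply: lt_le_trans ln_a_gt0 _; rewrite ler_ln ?posrE //; lra.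
rewrite ler_pdivrMr // mulrAC ler_pdivlMr //.
by apply: mulr_ln_le; rewrite // a_gt0.
Qed.

Lemma div_log2E x : x / log2 x = ln 2 * (x / ln x).
Proof. by rewrite /log2 invf_div mulrCA. Qed.

Lemma ler_div_log2 a b : 4 <= a <= b -> a / log2 a <= b / log2 b.
Proof.
move=> /andP[a_ge4 le_ab]; rewrite !div_log2E ler_pM2l; last first.
  by apply: ln_gt0; lra.
by apply: ler_div_ln; [exact: ln_ge1 | apply/andP; split => //; lra].
Qed.

End LogBounds.

Lemma log2_nat_gt0 (R : realType) (n : nat) : (1 < n)%N -> 0 < log2 (n%:R : R).
Proof.
by move=> n_gt1; apply: divr_gt0; apply: ln_gt0; rewrite ?ltr1n // (ltr_nat _ 1 2).
Qed.

Lemma cs_disabledE (R : realType) (KT : R) (n : nat) : (1 < n)%N ->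
  cs_disabled KT n <-> n%:R / log2 (n%:R : R) < KT.
Proof.
by move=> n_gt1; rewrite /cs_disabled /measurements ltr_pdivrMr ?log2_nat_gt0.
Qed.

Lemma le_level_threshold (R : realType) (c : nat -> nat)
    (N : forall i : nat, 'I_(c i) -> nat) (i : nat) (l : 'I_(c i)) :
  (N i l)%:R / log2 ((N i l)%:R : R) <= level_threshold R c N i.
Proof.
exact: (le_bigmax _ (fun l => (N i l)%:R / log2 ((N i l)%:R : R))).
Qed.

Theorem proposition1 (R : realType) (T : nat) (c : nat -> nat)
  (N : forall i : nat, 'I_(c i) -> nat) (KT : R) :
  (forall i : nat, (1 <= i <= T)%N -> (0 < c i)%N) ->
  (forall (i : nat) (l : 'I_(c i)), (1 <= i <= T)%N -> (3 < N i l)%N) ->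
  (forall (j i : nat) (l : 'I_(c j)) (p : 'I_(c i)),
      (1 <= j)%N -> (j < i)%N -> (i <= T)%N -> (N j l < N i p)%N) ->
  0 < KT ->
  forall i : nat, (1 <= i <= T)%N ->
  level_threshold R c N i < KT ->
  forall (j : nat) (l : 'I_(c j)), (1 <= j <= i)%N -> cs_disabled KT (N j l).
Proof.
move=> c_gt0 N_gt3 N_incr _ i /andP[i_ge1 i_leT] threshold_lt j l /andP[j_ge1 j_lei].
have N_ge4 : (4 <= N j l)%N by apply: N_gt3; rewrite j_ge1 (leq_trans j_lei).
apply/cs_disabledE; first exact: leq_trans N_ge4.
apply: le_lt_trans threshold_lt.
case: (ltngtP j i) j_lei => // [j_lti _ | <- _]; last exact: le_level_threshold.
pose p := Ordinal (c_gt0 i (introT andP (conj i_ge1 i_leT))).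
apply: le_trans (le_level_threshold R c N i p).
apply: ler_div_log2; rewrite !ler_nat N_ge4.
exact/ltnW/N_incr.
Qed.
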